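(* Let $n>1$ be odd, and let $R\subseteq (A_n)^{3n}$ be the set of all tuples $((1,x_1),(2,x_2),\dots,(n,x_n),(1,x_{n+1}),\dots,(n,x_{2n}),(1,x_{2n+1}),\dots,(n,x_{3n}))$ (i.e. the $j$-th entry is $(((j-1)\bmod n)+1,\,x_j)$) with $x_j\in\{0,1,2,3\}$ such that $x_{kn+1}\equiv x_{kn+2}\equiv\dots\equiv x_{kn+n}\pmod 2$ for each $k=0,1,2$, and $\sum_{i=1}^{3n}x_i\equiv 2\pmod 4$. Then $R$ is a subuniverse of $(\mathbf{A}_n)^{3n}$, i.e. it is closed under coordinatewise application of each $t_i$.
   Context: Let $[n]=\{1,\dots,n\}$ and let $m$ be the minority operation on $[n]$ given by $m(x,y,z)=x$ if $y=z$, $m(x,y,z)=y$ if $x=z$, and $m(x,y,z)=z$ otherwise. On $\{0,1,2,3\}$, $+,-$ denote arithmetic modulo 4 and $\oplus$ denotes bitwise XOR of 2-bit binary representations. Let $A_n=[n]\times\{0,1,2,3\}$. For $i\in[n]$ define the ternary operation $t_i$ on $A_n$ by $t_i((a_1,b_1),(a_2,b_2),(a_3,b_3))=(i,\,b_1-b_2+b_3)$ if $a_1=a_2=a_3=i$, and $=(m(a_1,a_2,a_3),\,b_1\oplus b_2\oplus b_3)$ otherwise. The algebra $\mathbf{A}_n$ has universe $A_n$ and basic operations $t_1,\dots,t_n$. *)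

From mathcomp Require Import all_boot.
Set Implicit Arguments. Unset Strict Implicit. Unset Printing Implicit Defensive.

Definition minority (x y z : nat) : nat :=
  if y == z then x else if x == z then y else z.

Definition mod4 (m : nat) : 'I_4 := Ordinal (ltn_pmod m (isT : 0 < 4)).
Definition sub4 (b1 b2 b3 : 'I_4) : 'I_4 :=
  mod4 (b1 + (4 - b2) + b3).
Definition xor4 (b1 b2 b3 : 'I_4) : 'I_4 :=
  mod4 (Nat.lxor (Nat.lxor b1 b2) b3).

Definition elt := (nat * 'I_4)%type.
Definition inA (n : nat) (x : elt) : bool := (1 <= x.1 <= n).

Definition t_op (i : nat) (x y z : elt) : elt :=
  if [&& x.1 == i, y.1 == i & z.1 == i] then (i, sub4 x.2 y.2 z.2)
  else (minority x.1 y.1 z.1, xor4 x.2 y.2 z.2).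

(* The relation R ⊆ (A_n)^{3n}; tuples indexed by j : 'I_(3n) (0-based),
   the j-th entry (0-based) has first component (j mod n) + 1. *)
Definition inR (n : nat) (r : 'I_(3 * n) -> elt) : bool :=
  [&& [forall j : 'I_(3 * n), (r j).1 == (j %% n).+1],
      [forall j : 'I_(3 * n), forall k : 'I_(3 * n),
          (j %/ n == k %/ n) ==> (odd (r j).2 == odd (r k).2)]
    & (\sum_(j < 3 * n) nat_of_ord (r j).2) %% 4 == 2].

Arguments inR : clear implicits.

(* On each coordinate t_i computes either b1 - b2 + b3 (mod 4) or the bitwise xor, and the
   two differ by twice a borrow that depends only on the parities of b1, b2, b3.  Hence the
   coordinate sums satisfy  sum t + 2 * (sum of borrows off the i-th positions)
   = s1 - s2 + s3 = 2 (mod 4).  Parities are constant on each block of n coordinates, so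
   each block contributes its borrow n - 1 times, an even number since n is odd: the
   borrow term vanishes mod 4.  Labels and blockwise parities are preserved directly. *)

From mathcomp Require Import all_boot zify.

Set Implicit Arguments.
Unset Strict Implicit.
Unset Printing Implicit Defensive.

(* x - y + z = (x xor y xor z) + 2 * borrow (odd x) (odd y) (odd z)  (mod 4) on 2-bit values. *)
Definition borrow (a b c : bool) : nat := (~~ a && b && ~~ c) || (a && ~~ b && c).

Lemma sub4E (x y z : 'I_4) : sub4 x y z = (x + 3 * y + z) %% 4 :> nat.
Proof. by move: x y z; do 3!case=> [[|[|[|[|?]]]] ?]. Qed.

Lemma sub4_xor4 (x y z : 'I_4) :
  sub4 x y z = (xor4 x y z + 2 * borrow (odd x) (odd y) (odd z)) %% 4 :> nat.
Proof. by move: x y z; do 3!case=> [[|[|[|[|?]]]] ?]. Qed.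

Lemma odd_sub4 (x y z : 'I_4) : odd (sub4 x y z) = odd x (+) odd y (+) odd z.
Proof. by move: x y z; do 3!case=> [[|[|[|[|?]]]] ?]. Qed.

Lemma odd_xor4 (x y z : 'I_4) : odd (xor4 x y z) = odd x (+) odd y (+) odd z.
Proof. by move: x y z; do 3!case=> [[|[|[|[|?]]]] ?]. Qed.

Lemma sum_nat_blocks k n (F : nat -> nat) :
  \sum_(0 <= j < k * n) F j = \sum_(0 <= b < k) \sum_(0 <= m < n) F (b * n + m).
Proof.
elim: k => [|k IHk]; first by rewrite !big_geq.
rewrite big_nat_recr //= -IHk mulSnr (big_cat_nat _ (leq_addr n (k * n))) //=.
congr (_ + _); rewrite -{1}[k * n]add0n big_addn addKn.
by apply: eq_bigr => m _; rewrite addnC.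
Qed.

Lemma sum_nat_skip1 n i : 0 < i <= n -> \sum_(0 <= m < n) (m.+1 != i : nat) = n.-1.
Proof.
case/andP=> i_gt0 le_in; have lt_in : i.-1 < n by rewrite prednK.
rewrite big_mkord -[n in n.-1]card_ord -(cardC1 (Ordinal lt_in)) -sum1_card [RHS]big_mkcond.
by apply: eq_bigr => m _; rewrite inE -val_eqE -{1}(prednK i_gt0) eqSS.
Qed.

Lemma sum_skip1_blocks k n i (C : nat -> nat) : 0 < i <= n ->
  \sum_(0 <= j < k * n) C (j %/ n) * ((j %% n).+1 != i) = n.-1 * \sum_(0 <= b < k) C b.
Proof.
move=> lt0in; have n_gt0 : 0 < n by case/andP: lt0in; apply: leq_trans.
rewrite sum_nat_blocks big_distrr; apply: eq_bigr => b _.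
rewrite [RHS]mulnC -(sum_nat_skip1 lt0in) big_distrr; apply: eq_big_nat => m /andP[_ lt_mn].
by rewrite divnMDl // divn_small // addn0 modnMDl modn_small.
Qed.

Lemma factor_through (I : finType) (K : eqType) (T : Type) (x0 : T) (f : I -> K) (c : I -> T) :
  (forall j k, f j = f k -> c j = c k) -> exists C : K -> T, forall j, c j = C (f j).
Proof.
move=> c_f; exists (fun b => if [pick j | f j == b] is Some j then c j else x0) => j.
by case: pickP => [j' /eqP/esym/c_f | /(_ j)]; last rewrite eqxx.
Qed.

Lemma even_sum_skip1_blocks k n i (c : 'I_(k * n) -> nat) : odd n -> 0 < i <= n ->
    (forall j l : 'I_(k * n), j %/ n = l %/ n -> c j = c l) ->
  ~~ odd (\sum_(j < k * n) ((j %% n).+1 != i) * c j).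
Proof.
move=> odd_n lt0in /(factor_through 0)[C eC].
rewrite (eq_bigr (fun j : 'I_(k * n) => C (j %/ n) * ((j %% n).+1 != i))); last first.
  by move=> j _; rewrite eC mulnC.
rewrite -(big_mkord xpredT (fun j => C (j %/ n) * ((j %% n).+1 != i))) sum_skip1_blocks //.
by rewrite oddM -subn1 oddB ?odd_n // odd_gt0.
Qed.

Lemma t_op_fst i a (x y z : elt) :
  x.1 = a -> y.1 = a -> z.1 = a -> (t_op i x y z).1 = a.
Proof. by move=> xa ya za; rewrite /t_op xa ya za !andbb /minority eqxx; case: eqP. Qed.

Lemma odd_t_op_snd i (x y z : elt) :
  odd (t_op i x y z).2 = odd x.2 (+) odd y.2 (+) odd z.2.
Proof. by rewrite /t_op; case: ifP => _; rewrite ?odd_sub4 ?odd_xor4. Qed.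

Lemma t_op_snd_mod4 i a (x y z : elt) : x.1 = a -> y.1 = a -> z.1 = a ->
  (t_op i x y z).2 + 2 * ((a != i) * borrow (odd x.2) (odd y.2) (odd z.2))
    = x.2 + 3 * y.2 + z.2 %[mod 4].
Proof.
move=> xa ya za; rewrite /t_op xa ya za !andbb; case: eqP => _ /=.
  by rewrite mul0n muln0 addn0 modn_mod; apply: sub4E.
by rewrite mul1n -sub4E sub4_xor4.
Qed.

Lemma inRP n (r : 'I_(3 * n) -> elt) :
  reflect [/\ forall j, (r j).1 = (j %% n).+1,
              forall j k : 'I_(3 * n), j %/ n = k %/ n -> odd (r j).2 = odd (r k).2
            & \sum_(j < 3 * n) (r j).2 = 2 %[mod 4]]
          (inR n r).
Proof.
apply: (iffP and3P) => [[/forallP lab /forallP par /eqP sum] | [lab par sum]].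
  split=> // [j | j k jk]; first exact/eqP.
  by have /forallP/(_ k) := par j; rewrite jk eqxx => /eqP.
split; last exact/eqP.
  by apply/forallP => j; apply/eqP.
by apply/forallP => j; apply/forallP => k; apply/implyP => /eqP/par ->.
Qed.

Theorem mainTheorem7 (n : nat) (hn : 1 < n) (hodd : odd n)
    (i : nat) (hi : 1 <= i <= n)
    (r1 r2 r3 : 'I_(3 * n) -> elt) :
  inR n r1 -> inR n r2 -> inR n r3 ->
  inR n (fun j => t_op i (r1 j) (r2 j) (r3 j)).
Proof.
move=> /inRP[lab1 par1 sum1] /inRP[lab2 par2 sum2] /inRP[lab3 par3 sum3].
pose c j := borrow (odd (r1 j).2) (odd (r2 j).2) (odd (r3 j).2).
have par_c (j k : 'I_(3 * n)) : j %/ n = k %/ n -> c j = c k.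
  by move=> jk; rewrite /c (par1 _ _ jk) (par2 _ _ jk) (par3 _ _ jk).
have /negbTE even_defect := even_sum_skip1_blocks hodd hi par_c.
apply/inRP; split=> [j | j k jk | ]; first exact: t_op_fst (lab1 j) (lab2 j) (lab3 j).
  by rewrite !odd_t_op_snd (par1 _ _ jk) (par2 _ _ jk) (par3 _ _ jk).
have sum_t : \sum_(j < 3 * n) (t_op i (r1 j) (r2 j) (r3 j)).2
             + 2 * \sum_(j < 3 * n) ((j %% n).+1 != i) * c j
    = \sum_(j < 3 * n) (r1 j).2 + 3 * \sum_(j < 3 * n) (r2 j).2
      + \sum_(j < 3 * n) (r3 j).2 %[mod 4].
  rewrite !big_distrr -!big_split -[LHS]modn_summ -[RHS]modn_summ.
  by congr (_ %% 4); apply: eq_bigr => j _; exact: t_op_snd_mod4 (lab1 j) (lab2 j) (lab3 j).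
move: sum_t; rewrite -[\sum_(j < 3 * n) _ * c j]odd_double_half even_defect add0n -mul2n.
lia.
Qed.
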